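(* The formal Burau group $\mathcal{B}$ equals Salter's group $\Gamma$; that is, every $A\in\mathcal{B}$ satisfies that $A|_{t=1}$ is a $3\times3$ permutation matrix.
   Context: For a matrix $A$ with Laurent polynomial entries, $\overline{A}$ denotes substitution $t\mapsto t^{-1}$ in every entry. Let $J_3=\begin{pmatrix}1&-t^{-1}&-t^{-1}\\-t&1&-t^{-1}\\-t&-t&1\end{pmatrix}$, $v=(t,t^2,t^3)$ (a row vector), $\vec{1}=(1,1,1)^T$. The formal Burau group is $\mathcal{B}=\{A\in\mathrm{GL}(3,\mathbb{Z}[t,t^{-1}]) : vA=v,\ A\vec 1=\vec 1,\ \overline{A}J_3A^T=J_3\}$, and Salter's group is $\Gamma=\{A\in\mathcal{B}: A|_{t=1}\text{ is a }3\times 3\text{ permutation matrix}\}$. *)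

From HB Require Import structures.
From mathcomp Require Import all_boot all_order all_algebra all_fingroup.
From mathcomp Require Export fraction.
Set Implicit Arguments. Unset Strict Implicit. Unset Printing Implicit Defensive.
Import Order.TTheory GRing.Theory Num.Theory.
Local Open Scope ring_scope.

(* Ambient field: Q(t) = fraction field of Z[t]; Z[t,t^-1] sits inside it. *)
Definition K : fieldType := {fraction {poly int}}.
Definition T : K := tofrac ('X : {poly int}).

Definition ev (p : {poly int}) (x : K) : K := (map_poly (fun c : int => c%:~R) p).[x].

(* The Laurent polynomial t^{-n} p(t), as an element of K ... *)
Definition lau (n : nat) (p : {poly int}) : K := ev p T / T ^+ n.
(* ... and its image under t |-> t^{-1}, i.e. t^{n} p(t^{-1}). *)
Definition laubar (n : nat) (p : {poly int}) : K := ev p T^-1 * T ^+ n.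

(* Every matrix over Z[t,t^-1] is t^{-n} M for some n and M over Z[t]. *)
Definition LM (n : nat) (M : 'M[{poly int}]_3) : 'M[K]_3 :=
  \matrix_(i, j) lau n (M i j).
Definition LMbar (n : nat) (M : 'M[{poly int}]_3) : 'M[K]_3 :=
  \matrix_(i, j) laubar n (M i j).

Definition J3 : 'M[K]_3 :=
  \matrix_(i, j) if i == j then 1 else if (i < j)%N then - T^-1 else - T.
Definition vB : 'rV[K]_3 := \row_(j < 3) T ^+ j.+1.
Definition one3 : 'cV[K]_3 := const_mx 1.

Definition in_GL_laurent (n : nat) (M : 'M[{poly int}]_3) : Prop :=
  exists (m : nat) (N : 'M[{poly int}]_3),
    LM n M *m LM m N = 1%:M /\ LM m N *m LM n M = 1%:M.

Definition in_formal_Burau (n : nat) (M : 'M[{poly int}]_3) : Prop :=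
  [/\ in_GL_laurent n M,
      vB *m LM n M = vB,
      LM n M *m one3 = one3 &
      LMbar n M *m J3 *m (LM n M)^T = J3].

(* (t^{-n} M)|_{t=1} = M|_{t=1} since 1^{-n} = 1 *)
Definition at_one (M : 'M[{poly int}]_3) : 'M[int]_3 := map_mx (fun p => p.[1]) M.

From HB Require Import structures.
From mathcomp Require Import all_boot all_order all_algebra all_fingroup.
From mathcomp Require Import zify.
Set Implicit Arguments. Unset Strict Implicit. Unset Printing Implicit Defensive.
Import Order.TTheory GRing.Theory Num.Theory.
Local Open Scope ring_scope.

(* Setting t = 1 is a partial ring morphism from Q(t) to Q, defined on fractions whose
   denominator does not vanish at 1; it sends t and t^-1 to 1. Hence a matrix A of the
   formal Burau group specializes to an integer matrix B with B 1 = 1 and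
   B J B^T = J, where J = 2I - 11^T is J3 at t = 1. As B 1 = 1, the second identity
   reduces to B B^T = I. An orthogonal integer matrix has a single nonzero entry, equal
   to 1 or -1, in each row, and the row sums equal to 1 force that entry to be 1. *)

Section Specialization.

Variable c : rat.

Local Notation evq x p := (map_poly (intr : int -> rat) p).[x].

(* The partial morphism is encoded as a relation: x is regular at t = c with value r. *)
Definition specializes (x : K) (r : rat) : Prop :=
  exists a b : {poly int},
    [/\ evq c b != 0, x = tofrac a / tofrac b & r = evq c a / evq c b].

Lemma tofrac_neq0_of_eval (b : {poly int}) : evq c b != 0 -> tofrac b != 0 :> K.
Proof.
by apply: contra; rewrite tofrac_eq0 => /eqP ->; rewrite rmorph0 horner0.
Qed.

Lemma specializes_fun x r r' : specializes x r -> specializes x r' -> r = r'.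
Proof.
move=> [a [b [b_neq0 -> ->]]] [a' [b' [b'_neq0 ab_eq ->]]].
move/eqP: ab_eq; rewrite eqr_div ?tofrac_neq0_of_eval // -!tofracM tofrac_eq.
move=> /eqP /(congr1 (fun p => evq c p)); rewrite !rmorphM !hornerM => ab_eq.
by apply/eqP; rewrite eqr_div // ab_eq.
Qed.

Lemma specializes_tofrac p : specializes (tofrac p) (evq c p).
Proof.
exists p, 1; rewrite rmorph1 hornerC tofrac1 !divr1.
by split; rewrite ?oner_neq0.
Qed.

Lemma specializes_int (z : int) : specializes z%:~R z%:~R.
Proof.
have := specializes_tofrac z%:~R.
by rewrite !rmorph_int horner_int.
Qed.

Lemma specializesD x y r s :
  specializes x r -> specializes y s -> specializes (x + y) (r + s).
Proof.
move=> [a [b [b_neq0 -> ->]]] [a' [b' [b'_neq0 -> ->]]].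
exists (a * b' + a' * b), (b * b'); rewrite !rmorphD !rmorphM !hornerD !hornerM.
split; first exact: mulf_neq0.
- by rewrite addf_div ?tofrac_neq0_of_eval.
- by rewrite addf_div.
Qed.

Lemma specializesM x y r s :
  specializes x r -> specializes y s -> specializes (x * y) (r * s).
Proof.
move=> [a [b [b_neq0 -> ->]]] [a' [b' [b'_neq0 -> ->]]].
exists (a * a'), (b * b'); rewrite !rmorphM !hornerM !mulf_div.
by split; rewrite ?mulf_neq0.
Qed.

Lemma specializesN x r : specializes x r -> specializes (- x) (- r).
Proof.
by move=> /(specializesM (specializes_int (-1))); rewrite !mulN1r.
Qed.

Lemma specializesV x r : r != 0 -> specializes x r -> specializes x^-1 r^-1.
Proof.
move=> r_neq0 [a [b [b_neq0 -> r_def]]].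
have a_neq0 : evq c a != 0.
  by apply: contra r_neq0; rewrite r_def => /eqP ->; rewrite mul0r.
by exists b, a; split; rewrite ?r_def ?invf_div.
Qed.

Lemma specializesX x r k : specializes x r -> specializes (x ^+ k) (r ^+ k).
Proof.
move=> x_r; elim: k => [|k IHk]; first exact: (specializes_int 1).
by rewrite !exprS; apply: specializesM.
Qed.

Lemma specializes_sum k (F : 'I_k -> K) (G : 'I_k -> rat) :
  (forall i, specializes (F i) (G i)) -> specializes (\sum_i F i) (\sum_i G i).
Proof.
move=> FG; apply: (big_ind2 specializes) => //; first exact: (specializes_int 0).
by move=> x r y s; apply: specializesD.
Qed.

Lemma specializesT : specializes T c.
Proof. by have := specializes_tofrac 'X; rewrite map_polyX hornerX. Qed.

Lemma specializes_TV : c != 0 -> specializes T^-1 c^-1.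
Proof. by move=> c_neq0; apply: specializesV specializesT. Qed.

Lemma specializes_ev p x r : specializes x r -> specializes (ev p x) (evq r p).
Proof.
move=> x_r; elim/poly_ind: p => [|p a IHp].
  by rewrite /ev !rmorph0 !horner0; apply: (specializes_int 0).
rewrite /ev !rmorphD !rmorphM /= !map_polyX !map_polyC /= !hornerE.
by apply: specializesD; [apply: specializesM | apply: specializes_int].
Qed.

Definition mx_specializes m n (X : 'M[K]_(m, n)) (Y : 'M[rat]_(m, n)) : Prop :=
  forall i j, specializes (X i j) (Y i j).

Lemma mx_specializes_fun m n (X : 'M_(m, n)) Y Y' :
  mx_specializes X Y -> mx_specializes X Y' -> Y = Y'.
Proof.
by move=> XY XY'; apply/matrixP => i j; apply: specializes_fun (XY i j) (XY' i j).
Qed.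

Lemma mx_specializes_mul m n p (X : 'M_(m, n)) (X' : 'M_(n, p)) Y Y' :
  mx_specializes X Y -> mx_specializes X' Y' -> mx_specializes (X *m X') (Y *m Y').
Proof.
by move=> XY XY' i j; rewrite !mxE; apply: specializes_sum => k; apply: specializesM.
Qed.

Lemma mx_specializes_tr m n (X : 'M_(m, n)) Y :
  mx_specializes X Y -> mx_specializes X^T Y^T.
Proof. by move=> XY i j; rewrite !mxE. Qed.

End Specialization.

Lemma specializes1_TV : specializes 1 T^-1 1.
Proof. by have := specializes_TV (oner_neq0 _); rewrite invr1. Qed.

Lemma specializes1_ev p x : specializes 1 x 1 -> specializes 1 (ev p x) (p.[1])%:~R.
Proof. by move/(specializes_ev p); rewrite -(rmorph1 intr) horner_map. Qed.

Definition J3_at1 : 'M[rat]_3 := 2%:M - const_mx 1.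

Lemma mx_specializes1_LM n M : mx_specializes 1 (LM n M) (map_mx intr (at_one M)).
Proof.
move=> i j; rewrite !mxE /lau.
have one_n_neq0 : (1 : rat) ^+ n != 0 by rewrite expr1n oner_neq0.
have := specializesM (specializes1_ev (M i j) (specializesT 1))
  (specializesV one_n_neq0 (specializesX n (specializesT 1))).
by rewrite expr1n invr1 mulr1.
Qed.

Lemma mx_specializes1_LMbar n M : mx_specializes 1 (LMbar n M) (map_mx intr (at_one M)).
Proof.
move=> i j; rewrite !mxE /laubar.
have := specializesM (specializes1_ev (M i j) specializes1_TV)
  (specializesX n (specializesT 1)).
by rewrite expr1n mulr1.
Qed.

Lemma mx_specializes1_J3 : mx_specializes 1 J3 J3_at1.
Proof.
move=> i j; rewrite !mxE; case: eqP => _; first exact: (specializes_int 1 1).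
rewrite mulr0n sub0r.
by case: ltnP => _; apply: specializesN; [apply: specializes1_TV | apply: specializesT].
Qed.

Lemma mx_specializes1_one3 : mx_specializes 1 one3 (const_mx 1).
Proof. by move=> i j; rewrite !mxE; apply: (specializes_int 1 1). Qed.

Lemma fixed_ones_form_orthogonal (R : numFieldType) n (A : 'M[R]_n) :
  A *m const_mx 1 = const_mx 1 :> 'cV_n ->
  A *m (2%:M - const_mx 1) *m A^T = 2%:M - const_mx 1 -> A *m A^T = 1%:M.
Proof.
move=> A_ones A_form.
have ones_outer : const_mx 1 = (const_mx 1 : 'cV[R]_n) *m (const_mx 1)^T :> 'M_n.
  by apply/matrixP => i j; rewrite !mxE big_ord1 !mxE mulr1.
have A_ones_form : A *m const_mx 1 *m A^T = const_mx 1 :> 'M_n.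
  by rewrite ones_outer !mulmxA A_ones -mulmxA -trmx_mul A_ones.
apply: (scalerI (a := 2)); first by rewrite pnatr_eq0.
move: A_form; rewrite mulmxBr mulmxBl A_ones_form mul_mx_scalar -scalemxAl.
by move/addIr => ->; rewrite scalemx1.
Qed.

Lemma int_unit_vector n (F : 'I_n -> int) :
  \sum_k F k ^+ 2 = 1 -> \sum_k F k = 1 -> {j | forall k, F k = (k == j)%:R}.
Proof.
move=> sum_sq sum1.
have idem_ge0 (k : 'I_n) : 0 <= F k ^+ 2 - F k by set x := F k; nia.
have sum_idem : \sum_k (F k ^+ 2 - F k) = 0 by rewrite sumrB sum_sq sum1 subrr.
have F_idem k : F k ^+ 2 = F k.
  by apply/eqP; rewrite -subr_eq0; apply/eqP/(psumr_eq0P _ sum_idem) => // l _.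
have F01 k : (F k == 0) || (F k == 1).
  by rewrite -[F k == 1]subr_eq0 -mulf_eq0 mulrBr mulr1 -expr2 F_idem subrr.
have F_nat k : F k \is a Num.nat by case/orP: (F01 k) => /eqP ->.
have [j [_ Fj1 Fj0]] := natr_sum_eq1 (fun k _ => F_nat k) sum1.
by exists j => k; case: eqVneq => [->|/Fj0 ->].
Qed.

Lemma int_orthogonal_perm_mx n (B : 'M[int]_n) :
  B *m B^T = 1%:M -> B *m const_mx 1 = const_mx 1 :> 'cV_n -> is_perm_mx B.
Proof.
move=> B_orth B_ones.
have B_row i : {j | forall k, B i k = (k == j)%:R}.
  apply: int_unit_vector.
  - move/matrixP: B_orth => /(_ i i); rewrite !mxE eqxx mulr1n => <-.
    by apply: eq_bigr => k _; rewrite mxE.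
  - move/matrixP: B_ones => /(_ i ord0); rewrite !mxE => <-.
    by apply: eq_bigr => k _; rewrite mxE mulr1.
pose s i := sval (B_row i).
have Bs i k : B i k = (k == s i)%:R := svalP (B_row i) k.
have s_inj : injective s.
  move=> i i' s_eq; apply/eqP; move/matrixP: B_orth => /(_ i i').
  rewrite !mxE (bigD1 (s i)) //= big1 => [|k k_neq]; last first.
    by rewrite mxE Bs (negPf k_neq) mul0r.
  by rewrite mxE !Bs s_eq eqxx mulr1 addr0; case: (i == i').
apply/is_perm_mxP; exists (perm s_inj).
by apply/matrixP => i j; rewrite !mxE permE Bs eq_sym.
Qed.

Lemma map_mx_intr_inj (R : numDomainType) m n :
  injective (map_mx (intr : int -> R) : 'M_(m, n) -> 'M_(m, n)).
Proof.
by move=> A B /matrixP AB; apply/matrixP => i j; have := AB i j; rewrite !mxE => /intr_inj.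
Qed.

Theorem lemma3p15 (n : nat) (M : 'M[{poly int}]_3) :
  in_formal_Burau n M -> is_perm_mx (at_one M).
Proof.
case=> _ _ fixes_ones preserves_J3.
set A := map_mx (intr : int -> rat) (at_one M).
have A_ones : A *m const_mx 1 = const_mx 1 :> 'cV_3.
  apply: mx_specializes_fun mx_specializes1_one3; rewrite -fixes_ones.
  exact: mx_specializes_mul (mx_specializes1_LM n M) mx_specializes1_one3.
have A_J3_at1 : A *m J3_at1 *m A^T = J3_at1.
  apply: mx_specializes_fun mx_specializes1_J3; rewrite -preserves_J3.
  apply: mx_specializes_mul (mx_specializes_tr (mx_specializes1_LM n M)).
  exact: mx_specializes_mul (mx_specializes1_LMbar n M) mx_specializes1_J3.
have A_orth := fixed_ones_form_orthogonal A_ones A_J3_at1.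
apply: int_orthogonal_perm_mx; apply: (@map_mx_intr_inj rat).
- by rewrite map_mxM -map_trmx map_mx1.
- by rewrite (map_mxM intr) map_const_mx; exact: A_ones.
Qed.
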